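(* Let $f_1^0, f_2^0, g_1^0, x^0\in\mathbb{R}$ with $\Delta := f_1^0-f_2^0>0$ and let $N\ge1$ be an integer. Let $\mu_1,\mu_2\ge0$ and $\max\{\mu_1,\mu_2\}<L_1<L_2<\infty$. Let $p_2 := L_1^{-1}\big(1+\frac{L_1^{-1}-L_2^{-1}}{\mu_2^{-1}-L_2^{-1}}\big)+L_1^{-1}\frac{L_1-\mu_2}{L_2-\mu_2}$ (with $1/0$ interpreted as $\infty$ when $\mu_2=0$) and $U:=-\sqrt{\frac{2\Delta}{p_2N}}$. Define $f_1(x)=\frac12L_1(x-x^0)^2+g_1^0(x-x^0)+f_1^0$ and, for $k=0,\dots,N$: $x^k=x^0-k\frac{U}{L_1}$, $g_2^k=g_1^0-(k+1)U$, $f_2^k=f_1(x^k)-\frac{N-k}{N}\Delta$, and for $k=0,\dots,N-1$: $\bar x^k=x^k-\frac{L_2-L_1}{L_2-\mu_2}\frac{U}{L_1}$. Define $f_2:\mathbb{R}\to\mathbb{R}$ by $f_2(x)=\frac12\mu_2(x-x^0)^2+g_2^0(x-x^0)+f_2^0$ for $x\le x^0$; $f_2(x)=\frac12\mu_2(x-x^k)^2+g_2^k(x-x^k)+f_2^k$ for $x\in[x^k,\bar x^k]$; $f_2(x)=\frac12L_2(x-x^{k+1})^2+g_2^{k+1}(x-x^{k+1})+f_2^{k+1}$ for $x\in[\bar x^k,x^{k+1}]$ ($k=0,\dots,N-1$); $f_2(x)=\frac12\mu_2(x-x^N)^2+g_2^N(x-x^N)+f_2^N$ for $x\ge x^N$.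 Then $f_1\in\mathcal{F}_{\mu_1,L_1}$, $f_2\in\mathcal{F}_{\mu_2,L_2}$, and performing $N$ iterations of DCA on $F=f_1-f_2$ starting from $x^0$ yields $$\tfrac12\min_{0\le k\le N}|\nabla f_1(x^k)-\nabla f_2(x^k)|^2=\frac{\Delta}{p_2N}.$$
   Context: For $\mu\in\mathbb{R}$ and $L\in(\mu,\infty]$, $\mathcal{F}_{\mu,L}$ is the class of proper lower semicontinuous functions $f$ with $f-\frac{\mu}{2}|\cdot|^2$ convex and $\frac{L}{2}|\cdot|^2-f$ convex (when $L<\infty$). A DCA iteration from $x$ on $F=f_1-f_2$ selects $g_2\in\partial f_2(x)$ and $x^+\in\operatorname{argmin}_w\{f_1(w)-g_2w\}$, i.e. (for differentiable $f_1$) $\nabla f_1(x^+)=g_2$. *)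

From Stdlib Require Import Reals Lra.
From Coquelicot Require Import Coquelicot.
Open Scope R_scope.

Definition convex_fun (f : R -> R) : Prop :=
  forall x y t, 0 <= t <= 1 ->
    f (t * x + (1 - t) * y) <= t * f x + (1 - t) * f y.

(** Lower semicontinuity (f is real-valued, hence proper). *)
Definition lsc (f : R -> R) : Prop :=
  forall x eps, 0 < eps -> exists delta, 0 < delta /\
    forall y, Rabs (y - x) < delta -> f x - eps < f y.

Definition F_class (mu L : R) (f : R -> R) : Prop :=
  lsc f /\
  convex_fun (fun x => f x - mu / 2 * x ^ 2) /\
  convex_fun (fun x => L / 2 * x ^ 2 - f x).

Definition subgrad (f : R -> R) (x g : R) : Prop :=
  forall y, f x + g * (y - x) <= f y.

Definition dca_step (f1 f2 : R -> R) (x xp : R) : Prop :=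
  exists g2, subgrad f2 x g2 /\
    forall w, f1 xp - g2 * xp <= f1 w - g2 * w.

Fixpoint min_upto (n : nat) (h : nat -> R) : R :=
  match n with
  | O => h O
  | S m => Rmin (min_upto m h) (h (S m))
  end.

Definition p2 (mu2 L1 L2 : R) : R :=
  / L1 * (1 + (if Req_EM_T mu2 0 then 0   (* 1/mu2 = +oo *)
               else (/ L1 - / L2) / (/ mu2 - / L2)))
  + / L1 * ((L1 - mu2) / (L2 - mu2)).

Definition Ustep (f10 f20 mu2 L1 L2 : R) (N : nat) : R :=
  - sqrt (2 * (f10 - f20) / (p2 mu2 L1 L2 * INR N)).

Definition f1fun (f10 g10 x0 L1 : R) (x : R) : R :=
  1 / 2 * L1 * (x - x0) ^ 2 + g10 * (x - x0) + f10.

Section Construction.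
Variables (f10 f20 g10 x0 mu2 L1 L2 : R) (N : nat).

Let Delta := f10 - f20.
Let U := Ustep f10 f20 mu2 L1 L2 N.

Definition xk (k : nat) : R := x0 - INR k * (U / L1).
Definition g2k (k : nat) : R := g10 - (INR k + 1) * U.
Definition f2k (k : nat) : R :=
  f1fun f10 g10 x0 L1 (xk k) - (INR N - INR k) / INR N * Delta.
Definition xbark (k : nat) : R := xk k - (L2 - L1) / (L2 - mu2) * (U / L1).

Definition mu_piece (k : nat) (x : R) : R :=
  1 / 2 * mu2 * (x - xk k) ^ 2 + g2k k * (x - xk k) + f2k k.
Definition L_piece (k : nat) (x : R) : R :=
  1 / 2 * L2 * (x - xk k) ^ 2 + g2k k * (x - xk k) + f2k k.

(** Scan the pieces left to right, for x > x^0: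
    [x^k, xbar^k] -> mu_piece k ; [xbar^k, x^{k+1}] -> L_piece (k+1);
    x >= x^N -> mu_piece N. *)
Fixpoint f2_aux (k fuel : nat) (x : R) : R :=
  match fuel with
  | O => mu_piece k x
  | S fuel' =>
      if Rle_dec x (xbark k) then mu_piece k x
      else if Rle_dec x (xk (S k)) then L_piece (S k) x
      else f2_aux (S k) fuel' x
  end.

Definition f2fun (x : R) : R :=
  if Rle_dec x x0 then mu_piece 0 x else f2_aux 0 N x.

End Construction.

From Stdlib Require Import Reals Lra Lia.
From Coquelicot Require Import Coquelicot.
Open Scope R_scope.

(* Write s := U / L1 < 0 and a := (L2 - L1) / (L2 - mu2) in (0, 1).  Then x^k = x^0 - k s, and
   f2 is the mu2-quadratic through (x^0, g2^0, f2^0) plus (L2 - mu2) times a sum of N "ramp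
   integrals": the k-th one vanishes left of xbar^k, is (x - xbar^k)^2 / 2 on [xbar^k, x^{k+1}]
   and affine afterwards.  Each of them is convex with a 1-Lipschitz derivative, and since the
   intervals [xbar^k, x^{k+1}] are disjoint their sum still has a 1-Lipschitz derivative, whence
   f2 is in F_{mu2,L2}.  As f2 is differentiable, its only subgradient at x^k is f2'(x^k) = g2^k,
   and the DCA step solves L1 (x - x^0) + g1^0 = g2^k, i.e. returns x^{k+1}.  Along these
   iterates f1' - f2' is constantly U, and U^2 / 2 = Delta / (p2 N) by the choice of U. *)

Lemma linear_le_quadratic_eq0 e C : (forall t, e * t <= C * t ^ 2) -> e = 0.
Proof.
  intros H.
  set (s := / (Rabs C + 1)).
  assert (Hs : 0 < s) by (apply Rinv_0_lt_compat; pose proof (Rabs_pos C); lra).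
  assert (HCs : C * s < 1).
  { apply Rle_lt_trans with (Rabs C * s); [apply Rmult_le_compat_r; [lra | apply Rle_abs]|].
    replace (Rabs C * s) with (1 - s) by (unfold s; field; pose proof (Rabs_pos C); lra).
    lra. }
  specialize (H (e * s)).
  assert (e * e * (s * (1 - C * s)) <= 0)
    by (replace (e * e * (s * (1 - C * s))) with (e * (e * s) - C * (e * s) ^ 2) by ring; lra).
  assert (0 < s * (1 - C * s)) by nra.
  destruct (Req_dec e 0) as [|He]; [assumption|].
  assert (0 < e * e) by (apply Rsqr_pos_lt, He).
  nra.
Qed.

Lemma quadratic_remainder_is_derive f d p K :
  (forall y, Rabs (f y - f p - d * (y - p)) <= K * (y - p) ^ 2) -> is_derive f p d.
Proof.
  intros H. apply is_derive_Reals. intros eps Heps.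
  assert (HK : 0 < Rabs K + 1) by (pose proof (Rabs_pos K); lra).
  exists (mkposreal (eps / (Rabs K + 1)) ltac:(apply Rdiv_lt_0_compat; lra)).
  simpl. intros t Ht Hlt.
  specialize (H (p + t)). replace (p + t - p) with t in H by ring.
  replace ((f (p + t) - f p) / t - d) with ((f (p + t) - f p - d * t) / t) by (field; auto).
  rewrite Rabs_div by auto.
  apply (Rmult_lt_reg_r (Rabs t)); [apply Rabs_pos_lt; auto|].
  unfold Rdiv. rewrite Rmult_assoc, Rinv_l, Rmult_1_r by (apply Rabs_no_R0; auto).
  apply Rle_lt_trans with (1 := H).
  assert (Ht2 : t ^ 2 = Rabs t * Rabs t) by (rewrite <- Rabs_mult, Rabs_right; [ring | nra]).
  assert (Rabs t * (Rabs K + 1) < eps).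
  { apply (Rmult_lt_compat_r (Rabs K + 1)) in Hlt; [|lra].
    unfold Rdiv in Hlt. rewrite Rmult_assoc, Rinv_l, Rmult_1_r in Hlt by lra. lra. }
  pose proof (Rabs_pos_lt t Ht). pose proof (Rle_abs K). nra.
Qed.

Lemma ex_derive_lsc (f : R -> R) : (forall x, ex_derive f x) -> lsc f.
Proof.
  intros Hd x eps Heps.
  assert (Hc : continuity_pt f x)
    by (apply continuity_pt_filterlim, (ex_derive_continuous f), Hd).
  destruct (Hc eps Heps) as [delta [Hdelta Hnear]].
  exists delta. split; [exact Hdelta|]. intros y Hy.
  destruct (Req_dec y x) as [->|Hyx]; [lra|].
  assert (Hfy : R_dist (f y) (f x) < eps)
    by (apply Hnear; split; [split; [exact I | auto] | exact Hy]).
  unfold R_dist in Hfy. pose proof (Rabs_def2 _ _ Hfy). lra.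
Qed.

Lemma subgrad_convex_fun phi d : (forall p, subgrad phi p (d p)) -> convex_fun phi.
Proof.
  intros H x y t Ht. set (z := t * x + (1 - t) * y).
  pose proof (H z x) as Hx. pose proof (H z y) as Hy.
  assert (t * (phi z + d z * (x - z)) <= t * phi x) by (apply Rmult_le_compat_l; lra).
  assert ((1 - t) * (phi z + d z * (y - z)) <= (1 - t) * phi y) by (apply Rmult_le_compat_l; lra).
  assert (t * (phi z + d z * (x - z)) + (1 - t) * (phi z + d z * (y - z)) = phi z)
    by (unfold z; ring).
  lra.
Qed.

Lemma nondecreasing_derive_convex_fun (phi d : R -> R) :
  (forall x, is_derive phi x (d x)) -> (forall x y, x <= y -> d x <= d y) -> convex_fun phi.
Proof.
  intros Hd Hmono. apply (subgrad_convex_fun phi d). intros p x.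
  assert (Hc : forall z, continuity_pt phi z).
  { intros z. apply continuity_pt_filterlim, (ex_derive_continuous phi). exists (d z). apply Hd. }
  destruct (MVT_gen phi p x d (fun z _ => Hd z) (fun z _ => Hc z)) as [c [Hcpx Hmvt]].
  destruct (Rle_dec p x).
  - rewrite Rmin_left, Rmax_right in Hcpx by lra.
    pose proof (Hmono p c ltac:(lra)). nra.
  - rewrite Rmin_right, Rmax_left in Hcpx by lra.
    pose proof (Hmono c p ltac:(lra)). nra.
Qed.

Lemma subgrad_eq_slope f p g d K :
  subgrad f p g -> (forall y, f y - f p - d * (y - p) <= K * (y - p) ^ 2) -> g = d.
Proof.
  intros Hg Hup. enough (g - d = 0) by lra.
  apply (linear_le_quadratic_eq0 _ K). intros t.
  specialize (Hg (p + t)). specialize (Hup (p + t)).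
  replace (p + t - p) with t in * by ring. lra.
Qed.

Lemma argmin_subgrad f g x : (forall w, f x - g * x <= f w - g * w) -> subgrad f x g.
Proof. intros H w. specialize (H w). lra. Qed.

Lemma taylor_bounds_is_derive mu K f d p :
  (forall x, mu / 2 * (x - p) ^ 2 <= f x - f p - d * (x - p) <= K * (x - p) ^ 2) ->
  is_derive f p d.
Proof.
  intros Hmodel. apply (quadratic_remainder_is_derive _ _ _ (Rabs mu / 2 + Rabs K)). intros x.
  destruct (Hmodel x) as [Hlo Hhi].
  pose proof (pow2_ge_0 (x - p)). set (s := (x - p) ^ 2) in *.
  assert (- Rabs mu * s <= mu * s)
    by (apply Rmult_le_compat_r; [lra | pose proof (Rle_abs (- mu)); rewrite Rabs_Ropp in *; lra]).
  assert (K * s <= Rabs K * s) by (apply Rmult_le_compat_r; [lra | apply Rle_abs]).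
  assert (0 <= Rabs mu * s) by (apply Rmult_le_pos; [apply Rabs_pos | lra]).
  assert (0 <= Rabs K * s) by (apply Rmult_le_pos; [apply Rabs_pos | lra]).
  apply Rabs_le. split; lra.
Qed.

Lemma F_class_of_taylor_bounds mu L K f d :
  (forall x p, mu / 2 * (x - p) ^ 2 <= f x - f p - d p * (x - p) <= K * (x - p) ^ 2) ->
  (forall x y, x <= y -> d y - d x <= L * (y - x)) ->
  F_class mu L f.
Proof.
  intros Hmodel Hlip.
  assert (Hd : forall p, is_derive f p (d p))
    by (intros p; apply (taylor_bounds_is_derive mu K); intros x; apply Hmodel).
  split; [|split].
  - apply ex_derive_lsc. intros x. exists (d x). apply Hd.
  - apply (subgrad_convex_fun _ (fun p => d p - mu * p)). intros p x.
    destruct (Hmodel x p). nra.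
  - apply (nondecreasing_derive_convex_fun _ (fun p => L * p - d p)).
    + intros p.
      assert (Hq : is_derive (fun x : R => L / 2 * x ^ 2) p (L * p))
        by (auto_derive; [easy | field]).
      exact (is_derive_minus _ _ p _ _ Hq (Hd p)).
    + intros x y Hxy. pose proof (Hlip x y Hxy). lra.
Qed.

Lemma min_upto_const n u m : (forall k, (k <= n)%nat -> u k = m) -> min_upto n u = m.
Proof.
  induction n as [|n IH]; intros Hu; simpl.
  - apply Hu. lia.
  - rewrite IH, (Hu (S n)) by (lia || (intros; apply Hu; lia)). apply Rmin_left. lra.
Qed.

Fixpoint sum_from (u : nat -> R) (i n : nat) : R :=
  match n with
  | O => 0
  | S n => u i + sum_from u (S i) n
  end.

Lemma sum_from_const u w i n : (forall j, u j = w) -> sum_from u i n = INR n * w.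
Proof.
  intros Hu. revert i. induction n as [|n IH]; intros i; simpl sum_from.
  - simpl. ring.
  - rewrite Hu, IH, S_INR. ring.
Qed.

Definition ramp (b c x : R) : R :=
  if Rle_dec x b then 0 else if Rle_dec x c then x - b else c - b.

Definition ramp_int (b c x : R) : R :=
  if Rle_dec x b then 0
  else if Rle_dec x c then (x - b) ^ 2 / 2
  else (c - b) ^ 2 / 2 + (c - b) * (x - c).

Section Ramp.
Variables b c : R.
Hypothesis b_le_c : b <= c.

Lemma ramp_left x : x <= b -> ramp b c x = 0.
Proof. intros. unfold ramp. destruct (Rle_dec x b); lra. Qed.

Lemma ramp_right x : c <= x -> ramp b c x = c - b.
Proof. intros. unfold ramp. repeat destruct (Rle_dec _ _); lra. Qed.

Lemma ramp_lipschitz x y : x <= y -> 0 <= ramp b c y - ramp b c x <= y - x.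
Proof. intros. unfold ramp. repeat destruct (Rle_dec _ _); lra. Qed.

Lemma ramp_int_left x : x <= b -> ramp_int b c x = 0.
Proof. intros. unfold ramp_int. destruct (Rle_dec x b); lra. Qed.

Lemma ramp_int_mid x : b <= x <= c -> ramp_int b c x = (x - b) ^ 2 / 2.
Proof.
  intros. unfold ramp_int. repeat destruct (Rle_dec _ _); try lra.
  replace x with b by lra. field.
Qed.

Lemma ramp_int_right x : c <= x -> ramp_int b c x = (c - b) ^ 2 / 2 + (c - b) * (x - c).
Proof.
  intros. unfold ramp_int. repeat destruct (Rle_dec _ _); try lra.
  - replace x with b by lra. replace c with b by lra. field.
  - replace x with c by lra. field.
Qed.

Lemma ramp_int_taylor_bounds x p :
  0 <= ramp_int b c x - ramp_int b c p - ramp b c p * (x - p) <= (x - p) ^ 2 / 2.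
Proof.
  unfold ramp_int, ramp.
  pose proof (pow2_ge_0 (x - p)); pose proof (pow2_ge_0 (x - b)); pose proof (pow2_ge_0 (p - b));
  pose proof (pow2_ge_0 (x - c)); pose proof (pow2_ge_0 (p - c)).
  repeat destruct (Rle_dec _ _); split; nra.
Qed.

End Ramp.

Section RampSums.
Variables b c : nat -> R.
Hypothesis b_le_c : forall j, b j <= c j.
Hypothesis c_le_b : forall j, c j <= b (S j).

Definition ramp_sum (i n : nat) (x : R) : R := sum_from (fun j => ramp (b j) (c j) x) i n.
Definition ramp_int_sum (i n : nat) (x : R) : R := sum_from (fun j => ramp_int (b j) (c j) x) i n.

Lemma ramp_sum_left i n x : x <= b i -> ramp_sum i n x = 0.
Proof.
  unfold ramp_sum. revert i. induction n as [|n IH]; intros i Hx; simpl; [reflexivity|].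
  rewrite ramp_left, IH; [ring | | exact Hx].
  pose proof (b_le_c i). pose proof (c_le_b i). lra.
Qed.

Lemma ramp_int_sum_left i n x : x <= b i -> ramp_int_sum i n x = 0.
Proof.
  unfold ramp_int_sum. revert i. induction n as [|n IH]; intros i Hx; simpl; [reflexivity|].
  rewrite ramp_int_left, IH; [ring | | exact Hx].
  pose proof (b_le_c i). pose proof (c_le_b i). lra.
Qed.

Lemma ramp_int_sum_taylor_bounds i n x p :
  0 <= ramp_int_sum i n x - ramp_int_sum i n p - ramp_sum i n p * (x - p)
    <= INR n * ((x - p) ^ 2 / 2).
Proof.
  unfold ramp_int_sum, ramp_sum. revert i.
  induction n as [|n IH]; intros i; simpl sum_from.
  - simpl. lra.
  - rewrite S_INR. pose proof (ramp_int_taylor_bounds (b i) (c i) (b_le_c i) x p).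
    specialize (IH (S i)). lra.
Qed.

Lemma ramp_sum_lipschitz i n x y : x <= y -> ramp_sum i n y - ramp_sum i n x <= y - x.
Proof.
  unfold ramp_sum. revert i x y. induction n as [|n IH]; intros i x y Hxy; simpl sum_from; [lra|].
  fold (ramp_sum (S i) n y) (ramp_sum (S i) n x).
  assert (Hbelow : forall u v, u <= v -> v <= c i ->
            ramp (b i) (c i) v + ramp_sum (S i) n v
              - (ramp (b i) (c i) u + ramp_sum (S i) n u) <= v - u).
  { intros u v Huv Hv. rewrite !(ramp_sum_left (S i)) by (pose proof (c_le_b i); lra).
    pose proof (ramp_lipschitz _ _ (b_le_c i) u v Huv). lra. }
  assert (Habove : forall u v, u <= v -> c i <= u ->
            ramp (b i) (c i) v + ramp_sum (S i) n v
              - (ramp (b i) (c i) u + ramp_sum (S i) n u) <= v - u).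
  { intros u v Huv Hu. rewrite !ramp_right by (pose proof (b_le_c i); lra).
    pose proof (IH (S i) u v Huv) as Hsum.
    fold (ramp_sum (S i) n v) (ramp_sum (S i) n u) in Hsum. lra. }
  destruct (Rle_dec y (c i)); [apply Hbelow; lra|].
  destruct (Rle_dec (c i) x); [apply Habove; lra|].
  pose proof (Hbelow x (c i) ltac:(lra) ltac:(lra)).
  pose proof (Habove (c i) y ltac:(lra) ltac:(lra)). lra.
Qed.

Lemma ramp_sum_saturated i k n x :
  (forall j, (j < k)%nat -> c (i + j)%nat <= x) -> x <= b (i + k)%nat ->
  ramp_sum i (k + n) x = sum_from (fun j => c j - b j) i k.
Proof.
  revert i. induction k as [|k IH]; intros i Hc Hb.
  - rewrite Nat.add_0_r in Hb. apply ramp_sum_left, Hb.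
  - unfold ramp_sum. simpl sum_from. fold (ramp_sum (S i) (k + n) x).
    rewrite ramp_right, IH.
    + reflexivity.
    + intros j Hj. replace (S i + j)%nat with (i + S j)%nat by lia. apply Hc. lia.
    + replace (S i + k)%nat with (i + S k)%nat by lia. exact Hb.
    + apply b_le_c.
    + specialize (Hc 0%nat ltac:(lia)). rewrite Nat.add_0_r in Hc. exact Hc.
Qed.

End RampSums.

Lemma p2_eq mu2 L1 L2 : 0 <= mu2 -> mu2 < L1 -> L1 < L2 ->
  p2 mu2 L1 L2 = (2 * L1 - (L1 - mu2) * ((L2 - L1) / (L2 - mu2))) / L1 ^ 2.
Proof.
  intros. unfold p2. destruct (Req_EM_T mu2 0) as [->|Hmu2].
  - field. lra.
  - field. repeat split; lra.
Qed.

Lemma f1fun_taylor f10 g10 x0 L1 x p :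
  f1fun f10 g10 x0 L1 x - f1fun f10 g10 x0 L1 p - (L1 * (p - x0) + g10) * (x - p)
    = L1 / 2 * (x - p) ^ 2.
Proof. unfold f1fun. field. Qed.

Lemma f1fun_taylor_bounds f10 g10 x0 mu L x p : mu <= L ->
  mu / 2 * (x - p) ^ 2
    <= f1fun f10 g10 x0 L x - f1fun f10 g10 x0 L p - (L * (p - x0) + g10) * (x - p)
    <= L / 2 * (x - p) ^ 2.
Proof. intros. rewrite f1fun_taylor. pose proof (pow2_ge_0 (x - p)). split; nra. Qed.

Lemma f1fun_is_derive f10 g10 x0 L p : is_derive (f1fun f10 g10 x0 L) p (L * (p - x0) + g10).
Proof.
  apply (taylor_bounds_is_derive L (L / 2)). intros x. apply f1fun_taylor_bounds. lra.
Qed.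

Lemma f1fun_F_class f10 g10 x0 mu L : mu <= L -> F_class mu L (f1fun f10 g10 x0 L).
Proof.
  intros. apply (F_class_of_taylor_bounds mu L (L / 2) _ (fun p => L * (p - x0) + g10)).
  - intros x p. apply f1fun_taylor_bounds. assumption.
  - intros x y _. lra.
Qed.

Section Construction.
Variables (f10 f20 g10 x0 mu2 L1 L2 : R) (N : nat).
Hypothesis Delta_pos : 0 < f10 - f20.
Hypothesis N_pos : (1 <= N)%nat.
Hypothesis mu2_ge0 : 0 <= mu2.
Hypothesis mu2_lt_L1 : mu2 < L1.
Hypothesis L1_lt_L2 : L1 < L2.

Local Notation P := (p2 mu2 L1 L2).
Local Notation U := (Ustep f10 f20 mu2 L1 L2 N).
Local Notation f1 := (f1fun f10 g10 x0 L1).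
Local Notation f2 := (f2fun f10 f20 g10 x0 mu2 L1 L2 N).
Local Notation x_ := (xk f10 f20 x0 mu2 L1 L2 N).
Local Notation xbar := (xbark f10 f20 x0 mu2 L1 L2 N).
Local Notation g2 := (g2k f10 f20 g10 mu2 L1 L2 N).
Local Notation q_mu := (mu_piece f10 f20 g10 x0 mu2 L1 L2 N).
Local Notation q_L := (L_piece f10 f20 g10 x0 mu2 L1 L2 N).
Local Notation xnext := (fun j => x_ (S j)).

Let a := (L2 - L1) / (L2 - mu2).
Let K2 := mu2 / 2 + (L2 - mu2) * INR N / 2.

Lemma a_bounds : 0 < a < 1.
Proof.
  unfold a. split; [apply Rdiv_lt_0_compat; lra|].
  apply (Rmult_lt_reg_r (L2 - mu2)); [lra|]. field_simplify; lra.
Qed.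

Lemma p2_pos : 0 < P.
Proof.
  rewrite p2_eq by assumption. fold a. pose proof a_bounds.
  apply Rdiv_lt_0_compat; nra.
Qed.

Lemma INR_N_pos : 0 < INR N.
Proof. apply lt_0_INR. lia. Qed.

Lemma Ustep_sq : U ^ 2 = 2 * (f10 - f20) / (P * INR N).
Proof.
  pose proof p2_pos. pose proof INR_N_pos.
  unfold Ustep. rewrite <- Rsqr_pow2, <- Rsqr_neg, Rsqr_sqrt; [reflexivity|].
  apply Rlt_le, Rdiv_lt_0_compat; nra.
Qed.

Lemma Ustep_neg : U < 0.
Proof.
  pose proof p2_pos. pose proof INR_N_pos.
  unfold Ustep. apply Ropp_lt_gt_0_contravar, sqrt_lt_R0, Rdiv_lt_0_compat; nra.
Qed.

Lemma f2k_eq k : f2k f10 f20 g10 x0 mu2 L1 L2 N k = f1 (x_ k) - (INR N - INR k) * (P * U ^ 2 / 2).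
Proof.
  pose proof p2_pos. pose proof INR_N_pos.
  unfold f2k. rewrite Ustep_sq. field. lra.
Qed.

Lemma L_piece_eq k x : q_L (S k) x = q_mu k x + (L2 - mu2) * ((x - xbar k) ^ 2 / 2).
Proof.
  unfold L_piece, mu_piece. rewrite !f2k_eq, p2_eq by assumption.
  unfold f1fun, g2k, xbark, xk. rewrite S_INR. field. lra.
Qed.

Lemma mu_piece_succ k x :
  q_mu (S k) x = q_mu k x + (L2 - mu2) * ((x_ (S k) - xbar k) ^ 2 / 2
                                        + (x_ (S k) - xbar k) * (x - x_ (S k))).
Proof.
  unfold mu_piece. rewrite !f2k_eq, p2_eq by assumption.
  unfold f1fun, g2k, xbark, xk. rewrite S_INR. field. lra.
Qed.

Let h := - U / L1.

Lemma h_pos : 0 < h.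
Proof. pose proof Ustep_neg. unfold h. apply Rdiv_lt_0_compat; lra. Qed.

Lemma xk_eq k : x_ k = x0 + INR k * h.
Proof. unfold xk, h. field. lra. Qed.

Lemma xbark_eq k : xbar k = x_ k + a * h.
Proof. unfold xbark, h, a. field. lra. Qed.

Lemma xk_le_xbark k : x_ k <= xbar k.
Proof. rewrite xbark_eq. pose proof a_bounds. pose proof h_pos. nra. Qed.

Lemma xbark_le_xnext k : xbar k <= x_ (S k).
Proof.
  rewrite xbark_eq, !xk_eq, S_INR. pose proof a_bounds. pose proof h_pos. nra.
Qed.

Lemma xnext_le_xbark k : x_ (S k) <= xbar (S k).
Proof. apply xk_le_xbark. Qed.

Lemma xk_le i j : (i <= j)%nat -> x_ i <= x_ j.
Proof.
  intros Hij. rewrite !xk_eq. apply le_INR in Hij. pose proof h_pos.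
  apply Rplus_le_compat_l, Rmult_le_compat_r; lra.
Qed.

Local Notation sum_int := (ramp_int_sum xbar xnext).
Local Notation sum_slope := (ramp_sum xbar xnext).

Lemma f2_aux_eq n k x : (k + n = N)%nat -> x_ k <= x ->
  f2_aux f10 f20 g10 x0 mu2 L1 L2 N k n x = q_mu k x + (L2 - mu2) * sum_int k n x.
Proof.
  revert k. induction n as [|n IH]; intros k Hkn Hx; simpl f2_aux.
  - unfold ramp_int_sum. simpl. ring.
  - unfold ramp_int_sum. simpl sum_from. fold (sum_int (S k) n x).
    pose proof (xbark_le_xnext k). pose proof (xnext_le_xbark k).
    destruct (Rle_dec x (xbar k)).
    + rewrite ramp_int_left, (ramp_int_sum_left _ _ xbark_le_xnext xnext_le_xbark) by lra. ring.
    + destruct (Rle_dec x (x_ (S k))).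
      * rewrite L_piece_eq, ramp_int_mid, (ramp_int_sum_left _ _ xbark_le_xnext xnext_le_xbark)
          by lra.
        ring.
      * rewrite IH, mu_piece_succ, ramp_int_right by (lia || lra). ring.
Qed.

Lemma f2fun_eq x : f2 x = q_mu 0 x + (L2 - mu2) * sum_int 0 N x.
Proof.
  unfold f2fun. destruct (Rle_dec x x0).
  - rewrite (ramp_int_sum_left _ _ xbark_le_xnext xnext_le_xbark); [ring|].
    pose proof (xk_le_xbark 0). rewrite xk_eq in *. simpl in *. lra.
  - apply f2_aux_eq; [reflexivity|]. rewrite xk_eq. simpl. lra.
Qed.

Definition f2_slope (x : R) : R := mu2 * (x - x0) + g2 0 + (L2 - mu2) * sum_slope 0 N x.

Lemma f2_taylor_bounds x p :
  mu2 / 2 * (x - p) ^ 2 <= f2 x - f2 p - f2_slope p * (x - p) <= K2 * (x - p) ^ 2.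
Proof.
  assert (Hq : q_mu 0 x - q_mu 0 p - (mu2 * (p - x0) + g2 0) * (x - p) = mu2 / 2 * (x - p) ^ 2).
  { unfold mu_piece. rewrite !xk_eq. simpl. field. }
  pose proof (ramp_int_sum_taylor_bounds _ _ xbark_le_xnext 0 N x p) as Hramp.
  assert (E : f2 x - f2 p - f2_slope p * (x - p) = mu2 / 2 * (x - p) ^ 2
     + (L2 - mu2) * (sum_int 0 N x - sum_int 0 N p - sum_slope 0 N p * (x - p))).
  { rewrite !f2fun_eq. unfold f2_slope. rewrite <- Hq. ring. }
  rewrite E. split.
  - assert (0 <= (L2 - mu2) * (sum_int 0 N x - sum_int 0 N p - sum_slope 0 N p * (x - p)))
      by (apply Rmult_le_pos; lra).
    lra.
  - assert ((L2 - mu2) * (sum_int 0 N x - sum_int 0 N p - sum_slope 0 N p * (x - p))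
              <= (L2 - mu2) * (INR N * ((x - p) ^ 2 / 2)))
      by (apply Rmult_le_compat_l; lra).
    unfold K2. lra.
Qed.

Lemma f2_slope_lipschitz x y : x <= y -> f2_slope y - f2_slope x <= L2 * (y - x).
Proof.
  intros Hxy. unfold f2_slope.
  pose proof (ramp_sum_lipschitz _ _ xbark_le_xnext xnext_le_xbark 0 N x y Hxy).
  assert ((L2 - mu2) * (sum_slope 0 N y - sum_slope 0 N x) <= (L2 - mu2) * (y - x))
    by (apply Rmult_le_compat_l; lra).
  lra.
Qed.

Lemma f2_slope_xk k : (k <= N)%nat -> f2_slope (x_ k) = g2 k.
Proof.
  intros Hk. unfold f2_slope.
  replace (sum_slope 0 N (x_ k)) with (sum_slope 0 (k + (N - k)) (x_ k))
    by (now replace (k + (N - k))%nat with N by lia).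
  rewrite (ramp_sum_saturated _ _ xbark_le_xnext xnext_le_xbark).
  - rewrite (sum_from_const _ (x_ 1 - xbar 0)).
    + unfold g2k, xbark, xk. change (INR 0) with 0. change (INR 1) with 1. field. lra.
    + intros j. rewrite !xbark_eq, !xk_eq, S_INR. simpl. ring.
  - intros j Hj. apply xk_le. lia.
  - apply xk_le_xbark.
Qed.

Lemma f2_is_derive p : is_derive f2 p (f2_slope p).
Proof. apply (taylor_bounds_is_derive mu2 K2). intros x. apply f2_taylor_bounds. Qed.

Lemma f2_F_class : F_class mu2 L2 f2.
Proof.
  apply (F_class_of_taylor_bounds mu2 L2 K2 _ f2_slope).
  - apply f2_taylor_bounds.
  - apply f2_slope_lipschitz.
Qed.

Lemma dca_iterates_xk (y : nat -> R) :
  y O = x0 -> (forall k, (k < N)%nat -> dca_step f1 f2 (y k) (y (S k))) ->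
  forall k, (k <= N)%nat -> y k = x_ k.
Proof.
  intros Hy0 Hstep. induction k as [|k IH]; intros Hk.
  - rewrite Hy0, xk_eq. simpl. ring.
  - destruct (Hstep k ltac:(lia)) as [g [Hsub Hmin]].
    rewrite IH in Hsub by lia.
    assert (Hg2 : g = g2 k).
    { rewrite <- f2_slope_xk by lia.
      apply (subgrad_eq_slope _ _ _ _ K2 Hsub).
      intros w. apply f2_taylor_bounds. }
    assert (Hg1 : g = L1 * (y (S k) - x0) + g10).
    { apply (subgrad_eq_slope _ _ _ _ (L1 / 2) (argmin_subgrad _ _ _ Hmin)).
      intros w. rewrite f1fun_taylor. lra. }
    assert (Hsol : y (S k) = x0 + (g2 k - g10) / L1) by (rewrite <- Hg2, Hg1; field; lra).
    rewrite Hsol. unfold g2k, xk. rewrite S_INR. field. lra.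
Qed.

Lemma slope_gap_xk k : (k <= N)%nat -> L1 * (x_ k - x0) + g10 - f2_slope (x_ k) = U.
Proof. intros Hk. rewrite f2_slope_xk by exact Hk. unfold g2k, xk. field. lra. Qed.

End Construction.

Theorem proposition6 (f10 f20 g10 x0 : R) (N : nat) (mu1 mu2 L1 L2 : R) :
  0 < f10 - f20 ->
  (1 <= N)%nat ->
  0 <= mu1 -> 0 <= mu2 ->
  Rmax mu1 mu2 < L1 -> L1 < L2 ->
  let f1 := f1fun f10 g10 x0 L1 in
  let f2 := f2fun f10 f20 g10 x0 mu2 L1 L2 N in
  F_class mu1 L1 f1 /\
  F_class mu2 L2 f2 /\
  (forall y : nat -> R,
     y O = x0 ->
     (forall k, (k < N)%nat -> dca_step f1 f2 (y k) (y (S k))) ->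
     (forall k, (k <= N)%nat -> ex_derive f1 (y k) /\ ex_derive f2 (y k)) /\
     1 / 2 * min_upto N (fun k => (Derive f1 (y k) - Derive f2 (y k)) ^ 2)
       = (f10 - f20) / (p2 mu2 L1 L2 * INR N)).
Proof.
  intros HD HN _ Hmu2 Hmax HL f1 f2. subst f1 f2.
  assert (Hmu1L1 : mu1 < L1) by (apply Rle_lt_trans with (2 := Hmax), Rmax_l).
  assert (Hmu2L1 : mu2 < L1) by (apply Rle_lt_trans with (2 := Hmax), Rmax_r).
  split; [|split].
  - apply f1fun_F_class. lra.
  - apply f2_F_class; assumption.
  - intros y Hy0 Hstep.
    pose proof (dca_iterates_xk f10 f20 g10 x0 mu2 L1 L2 N HD HN Hmu2 Hmu2L1 HL y Hy0 Hstep) as Hy.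
    pose proof (f2_is_derive f10 f20 g10 x0 mu2 L1 L2 N HD HN Hmu2 Hmu2L1 HL) as Hd2.
    split.
    + intros k _. split; [eexists; apply f1fun_is_derive | eexists; apply Hd2].
    + rewrite (min_upto_const N _ (Ustep f10 f20 mu2 L1 L2 N ^ 2)).
      * pose proof (INR_N_pos N HN). pose proof (p2_pos mu2 L1 L2 Hmu2 Hmu2L1 HL).
        rewrite Ustep_sq by assumption. field. lra.
      * intros k Hk.
        rewrite (is_derive_unique _ _ _ (f1fun_is_derive _ _ _ _ _)),
          (is_derive_unique _ _ _ (Hd2 _)), Hy by exact Hk.
        rewrite slope_gap_xk by assumption. reflexivity.
Qed.
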